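(* Let $\ell\ge2$, $r_0,\dots,r_\ell\ge1$ integers, $d_0,\dots,d_\ell$ integers with $d_V=\sum_kd_k=0$, and $\mathbf{g}\ge1$ an integer. Then, as $c\to+\infty$, the quantity $\mathring{\mathfrak{F}}(c)$ defined in the context has an asymptotic expansion $$\mathring{\mathfrak{F}}(c)=(\mu_0-\mu_1)\Big(Fut_1\,c+Fut_2+\frac{Fut_3}{c}+\frac{Fut_4}{c^2}+\cdots\Big),$$ where the real coefficients $Fut_i$ depend only on the $r_k$, $d_k$ and $\mathbf{g}$, and $$Fut_1=\frac{2\pi_R^2r_Vr_0r_1}{(r_V-1)!(r_V+1)!(r_0+r_1)}>0,\qquad Fut_2=\frac{2r_0r_1\pi_R^2}{(r_V-1)!(r_V+2)!(r_0+r_1)}\big[(r_V+2)(\mathbf{g}-1)+2r_V\mu_{01}\big],$$ with $\mu_{01}=\frac{d_0+d_1}{r_0+r_1}$.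
   Context: $\mu_k=d_k/r_k$, $r_V=\sum_kr_k$, $\pi_R=\prod_k(r_k-1)!$, $c$ real with $c>\max_k\mu_k$. For $1\le j\ne k\le\ell$: $\alpha_0=\frac{\pi_R}{r_V!}(cr_V-d_V)$, $\alpha_j=\frac{\pi_R}{(r_V+1)!}r_j(c(r_V+1)-d_V-\mu_j)$, $\alpha_{jk}=\frac{\pi_R}{(r_V+2)!}r_jr_k(c(r_V+2)-d_V-\mu_j-\mu_k)$, $\alpha_{jj}=\frac{\pi_R}{(r_V+2)!}r_j(r_j+1)(c(r_V+2)-d_V-2\mu_j)$, $\beta_0=\frac{\pi_R}{(r_V-1)!}((r_V-1)r_Vc+2(1-\mathbf{g})-(r_V-1)d_V)$, $\beta_j=\frac{\pi_Rr_j}{r_V!}(r_V(r_V-1)c+2(1-\mathbf{g})-d_V(r_V-2)-r_V\mu_j)$. $A$ is the $(\ell-1)\times(\ell-1)$ matrix $A_{ij}=\alpha_{ij}-\alpha_i\alpha_j/\alpha_0$, $2\le i,j\le\ell$ (invertible for $c>\max\mu_k$), and $\mathring{\mathfrak{F}}(c)=(\alpha_0\beta_1-\alpha_1\beta_0)-\sum_{j,r=2}^\ell(A^{-1})_{rj}(\alpha_0\beta_r-\alpha_r\beta_0)\big(\alpha_{j1}-\frac{\alpha_1\alpha_j}{\alpha_0}\big)$. *)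

From HB Require Import structures.
From mathcomp Require Import all_boot all_order all_algebra.
From mathcomp Require Import reals.
Set Implicit Arguments. Unset Strict Implicit. Unset Printing Implicit Defensive.
Import Order.TTheory GRing.Theory Num.Theory.
Local Open Scope ring_scope.

(* Vertices are 0..l; the data r d are given as sequences nat -> _, of which
   only the values at 0..l are used. *)
Section Defs.
Variable R : realType.
Variables (l : nat) (r : nat -> nat) (d : nat -> int) (g : nat).

Definition mu (k : nat) : R := (d k)%:~R / (r k)%:R.
Definition rV : nat := (\sum_(k < l.+1) r k)%N.
Definition dV : R := \sum_(k < l.+1) (d k)%:~R.
Definition piR : R := (\prod_(k < l.+1) ((r k).-1)`!)%N%:R.

Definition alpha0 (c : R) : R :=
  piR / (rV`!)%:R * (c * rV%:R - dV).
Definition alpha1 (j : nat) (c : R) : R :=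
  piR / (rV.+1`!)%:R * (r j)%:R * (c * (rV.+1)%:R - dV - mu j).
Definition alpha2 (j k : nat) (c : R) : R :=
  if j == k then
    piR / (rV.+2`!)%:R * (r j)%:R * ((r j).+1)%:R
      * (c * (rV.+2)%:R - dV - 2 * mu j)
  else
    piR / (rV.+2`!)%:R * (r j)%:R * (r k)%:R
      * (c * (rV.+2)%:R - dV - mu j - mu k).
Definition beta0 (c : R) : R :=
  piR / ((rV.-1)`!)%:R
    * ((rV.-1)%:R * rV%:R * c + 2 * (1 - g%:R) - (rV.-1)%:R * dV).
Definition beta1 (j : nat) (c : R) : R :=
  piR * (r j)%:R / (rV`!)%:R
    * (rV%:R * (rV.-1)%:R * c + 2 * (1 - g%:R) - dV * (rV%:R - 2)
       - rV%:R * mu j).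

(* The (l-1)x(l-1) matrix A, row/column index i : 'I_(l.-1) stands for
   vertex i+2 (so indices run over 2..l). *)
Definition Amat (c : R) : 'M[R]_(l.-1) :=
  \matrix_(i, j) (alpha2 (i.+2) (j.+2) c
                  - alpha1 (i.+2) c * alpha1 (j.+2) c / alpha0 c).

Definition Fring (c : R) : R :=
  (alpha0 c * beta1 1 c - alpha1 1 c * beta0 c)
  - \sum_(j < l.-1) \sum_(s < l.-1)
      (invmx (Amat c)) s j
      * (alpha0 c * beta1 (s.+2) c - alpha1 (s.+2) c * beta0 c)
      * (alpha2 (j.+2) 1 c - alpha1 1 c * alpha1 (j.+2) c / alpha0 c).

Definition Fut1 : R :=
  2 * piR ^+ 2 * rV%:R * (r 0)%:R * (r 1)%:R
  / (((rV.-1)`!)%:R * (rV.+1`!)%:R * (r 0 + r 1)%:R).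

Definition mu01 : R := (d 0 + d 1)%:~R / (r 0 + r 1)%:R.

Definition Fut2 : R :=
  2 * (r 0)%:R * (r 1)%:R * piR ^+ 2
  / (((rV.-1)`!)%:R * (rV.+2`!)%:R * (r 0 + r 1)%:R)
  * ((rV.+2)%:R * (g%:R - 1) + 2 * rV%:R * mu01).
End Defs.

From HB Require Import structures.
From mathcomp Require Import all_boot all_order all_algebra.
From mathcomp Require Import reals.
From mathcomp Require Import ring lra zify.
Set Implicit Arguments. Unset Strict Implicit. Unset Printing Implicit Defensive.
Import Order.TTheory GRing.Theory Num.Theory.
Local Open Scope ring_scope.

(* Put t = 1/c.  Since d_V = 0, the matrix A equals
   (kappa/t) diag(D_j(t)) (I - (1 r^T + s(t) d^T)/r_V), with 1 the all-ones vector
   and s_j(t) = O(t): a rank-two perturbation of a diagonal matrix.  Moreover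
   alpha_0 beta_j - alpha_j beta_0 is proportional to d_j.  Hence A y = b reduces to a
   2x2 linear system for (sum r_j y_j, sum d_j y_j), and Cramer's rule gives
   F(c) = (mu_0 - mu_1) c phi(1/c), where phi(t) = K (r_V + (g - 1) t) / det2(t) is a
   rational function of t with det2(0) = (r_0 + r_1) r_V <> 0.  Functions with
   asymptotic power series at 0+ form a ring in which series with nonzero constant
   term are invertible, so phi has such an expansion; its first two coefficients are
   Fut_1 and Fut_2. *)

Section AsymptoticExpansion.
Variable R : realFieldType.
Implicit Types (f h : R -> R) (a b : nat -> R) (p : {poly R}).

Definition trunc_sum a N (t : R) := (\poly_(i < N) a i).[t].

Definition expands_upto f a N := exists2 del : R, 0 < del &
  exists K : R, forall t, 0 < t -> t < del -> `|f t - trunc_sum a N t| <= K * t ^+ N.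

Definition expands f a := forall N, expands_upto f a N.

Lemma poly_bounded01 p : exists B : R, forall t, 0 <= t -> t <= 1 -> `|p.[t]| <= B.
Proof.
exists (\sum_(i < size p) `|p`_i|) => t t0 t1.
rewrite horner_coef; apply: le_trans (ler_norm_sum _ _ _) _.
apply: ler_sum => i _; rewrite normrM ler_piMr //.
by rewrite normrX exprn_ile1 // ger0_norm.
Qed.

Lemma trunc_sum_eq a b N :
  (forall i, (i < N)%N -> a i = b i) -> trunc_sum a N =1 trunc_sum b N.
Proof.
move=> eab t; rewrite /trunc_sum; congr horner; apply/polyP => i.
by rewrite !coef_poly; case: ifP => // /eab.
Qed.

Lemma expands_upto_ext f h a b N : f =1 h ->
  (forall i, (i < N)%N -> a i = b i) -> expands_upto f a N -> expands_upto h b N.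
Proof.
move=> efh eab [del del0 [K HK]]; exists del => //; exists K => t t0 tdel.
by rewrite -efh -(trunc_sum_eq eab); apply: HK.
Qed.

Lemma expands_ext f h a b : f =1 h -> a =1 b -> expands f a -> expands h b.
Proof. by move=> efh eab E N; apply: expands_upto_ext (E N) => // i _. Qed.

Lemma expands_upto_pred f a N : expands_upto f a N.+1 -> expands_upto f a N.
Proof.
move=> [del del0 [K HK]]; exists (Num.min del 1); first by rewrite lt_min del0 ltr01.
exists (`|K| + `|a N|) => t t0; rewrite lt_min => /andP[tdel t1].
have tN : 0 <= t ^+ N by rewrite exprn_ge0 // ltW.
have -> : f t - trunc_sum a N t = (f t - trunc_sum a N.+1 t) + a N * t ^+ N.
  by rewrite /trunc_sum !horner_poly big_ord_recr /=; ring.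
apply: le_trans (ler_normD _ _) _; rewrite mulrDl; apply: lerD.
  apply: le_trans (HK t t0 tdel) _; rewrite exprS mulrA ler_wpM2r //.
  by have := ler_norm K; have := normr_ge0 K; nra.
by rewrite normrM normrX (ger0_norm (ltW t0)).
Qed.

Lemma expands_poly p : expands (horner p) (fun i => p`_i).
Proof.
move=> N; have [B HB] := poly_bounded01 (drop_poly N p).
exists 1 => //; exists B => t t0 t1.
rewrite -[trunc_sum _ _ _]/(take_poly N p).[t].
rewrite -{1}(poly_take_drop N p) hornerD addrC addKr hornerM hornerXn.
rewrite normrM normrX (ger0_norm (ltW t0)) ler_wpM2r ?exprn_ge0 ?(ltW t0) //.
by apply: HB; rewrite ltW.
Qed.

Lemma expands_upto_add f h a b N : expands_upto f a N -> expands_upto h b N ->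
  expands_upto (fun t => f t + h t) (fun i => a i + b i) N.
Proof.
move=> [d1 d10 [K1 H1]] [d2 d20 [K2 H2]].
exists (Num.min d1 d2); first by rewrite lt_min d10.
exists (K1 + K2) => t t0; rewrite lt_min => /andP[t1 t2].
have -> : trunc_sum (fun i => a i + b i) N t = trunc_sum a N t + trunc_sum b N t.
  by rewrite /trunc_sum !horner_poly -big_split; apply: eq_bigr => i _; rewrite mulrDl.
rewrite mulrDl opprD addrACA.
by apply: le_trans (ler_normD _ _) _; apply: lerD; [apply: H1 | apply: H2].
Qed.

Lemma expands_add f h a b : expands f a -> expands h b ->
  expands (fun t => f t + h t) (fun i => a i + b i).
Proof. by move=> E1 E2 N; apply: expands_upto_add. Qed.

Lemma expands_upto_bounded f a N : expands_upto f a N ->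
  exists2 del : R, 0 < del & exists B : R, forall t, 0 < t -> t < del -> `|f t| <= B.
Proof.
move=> [del del0 [K HK]]; have [B HB] := poly_bounded01 (\poly_(i < N) a i).
exists (Num.min del 1); first by rewrite lt_min del0 ltr01.
exists (B + `|K|) => t t0; rewrite lt_min => /andP[tdel t1].
rewrite -[f t](subrK (trunc_sum a N t)); apply: le_trans (ler_normD _ _) _.
rewrite addrC; apply: lerD; first by apply: HB; rewrite ltW.
apply: le_trans (HK t t0 tdel) _; apply: le_trans (ler_norm _) _.
by rewrite normrM normrX (ger0_norm (ltW t0)) ler_piMr // exprn_ile1 // ltW.
Qed.

Definition cauchy a b n := \sum_(i < n.+1) a i * b (n - i)%N.

Lemma trunc_sum_cauchy a b N t :
  let pab := \poly_(i < N) a i * \poly_(i < N) b i in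
  trunc_sum (cauchy a b) N t
    = trunc_sum a N t * trunc_sum b N t - t ^+ N * (drop_poly N pab).[t].
Proof.
move=> pab; rewrite /trunc_sum; have -> : \poly_(i < N) cauchy a b i = take_poly N pab.
  apply/polyP => n; rewrite coef_take_poly coef_poly; case: ltnP => // nN.
  rewrite coefM; apply: eq_bigr => -[i /=]; rewrite ltnS => ilen _.
  by rewrite !coef_poly (leq_ltn_trans (leq_subr i n) nN) (leq_ltn_trans ilen nN).
rewrite -hornerM -/pab -{2}(poly_take_drop N pab) hornerD hornerM hornerXn.
by rewrite [_ * t ^+ N]mulrC addrK.
Qed.

Lemma expands_upto_mul f h a b N : expands_upto f a N -> expands_upto h b N ->
  expands_upto (fun t => f t * h t) (cauchy a b) N.
Proof.
move=> Ef Eh; have [d3 d30 [Bh HBh]] := expands_upto_bounded Eh.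
move: Ef Eh => [d1 d10 [K1 H1]] [d2 d20 [K2 H2]].
have [Ba HBa] := poly_bounded01 (\poly_(i < N) a i).
have [Bq HBq] := poly_bounded01 (drop_poly N (\poly_(i < N) a i * \poly_(i < N) b i)).
exists (Num.min (Num.min d1 d2) (Num.min d3 1)); first by rewrite !lt_min d10 d20 d30 ltr01.
exists (K1 * `|Bh| + `|Ba| * K2 + `|Bq|) => t t0.
rewrite !lt_min => /andP[/andP[t1 t2] /andP[t3 t4]].
have tN : 0 <= t ^+ N by rewrite exprn_ge0 // ltW.
rewrite trunc_sum_cauchy /=.
set A := trunc_sum a N t; set B := trunc_sum b N t; set Q := _.[t].
have -> : f t * h t - (A * B - t ^+ N * Q) = (f t - A) * h t + A * (h t - B) + t ^+ N * Q.
  by ring.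
rewrite [X in _ <= X]mulrDl [X in _ <= X + _]mulrDl.
apply: le_trans (ler_normD _ _) _; apply: lerD; last first.
  rewrite normrM (ger0_norm tN) mulrC ler_wpM2r //.
  by apply: le_trans (HBq t _ _) (ler_norm _); rewrite ltW.
apply: le_trans (ler_normD _ _) _; apply: lerD.
  rewrite normrM mulrAC; apply: ler_pM => //; first exact: H1.
  exact: le_trans (HBh t t0 t3) (ler_norm _).
rewrite normrM -mulrA; apply: ler_pM => //; last exact: H2.
exact: le_trans (HBa t (ltW t0) (ltW t4)) (ler_norm _).
Qed.

Lemma expands_mul f h a b : expands f a -> expands h b ->
  expands (fun t => f t * h t) (cauchy a b).
Proof. by move=> E1 E2 N; apply: expands_upto_mul. Qed.

Lemma expands_bounded_below f a : expands_upto f a 1 -> a 0%N != 0 ->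
  exists2 del : R, 0 < del & forall t, 0 < t -> t < del -> `|a 0%N| / 2 <= `|f t|.
Proof.
move=> [d1 d10 [K HK]] a0; have a0pos : 0 < `|a 0%N| by rewrite normr_gt0.
have Kpos : 0 < `|K| + 1 by rewrite ltr_pwDr ?normr_ge0.
exists (Num.min d1 (`|a 0%N| / 2 / (`|K| + 1))).
  by rewrite lt_min d10 !divr_gt0.
move=> t t0; rewrite lt_min ltr_pdivlMr // => /andP[t1 t2].
have := HK t t0 t1; rewrite /trunc_sum horner_poly big_ord1 expr0 mulr1 expr1 => near.
have := ler_normB (f t) (f t - a 0%N); rewrite opprB addrCA subrr addr0.
have : K * t <= `|K| * t by rewrite ler_wpM2r ?ler_norm // ltW.
nra.
Qed.

Fixpoint series_inv_seq a n : seq R :=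
  if n is m.+1 then
    let s := series_inv_seq a m in
    rcons s (- (a 0%N)^-1 * \sum_(i < m.+1) a i.+1 * s`_(m - i))
  else [:: (a 0%N)^-1].

Definition series_inv a n := (series_inv_seq a n)`_n.

Lemma size_series_inv_seq a n : size (series_inv_seq a n) = n.+1.
Proof. by elim: n => //= n IH; rewrite size_rcons IH. Qed.

Lemma nth_series_inv_seq a n i :
  (i <= n)%N -> (series_inv_seq a n)`_i = series_inv a i.
Proof.
elim: n => [|n IH]; first by rewrite leqn0 => /eqP ->.
rewrite leq_eqVlt => /predU1P[-> //|]; rewrite ltnS => ilen /=.
by rewrite nth_rcons size_series_inv_seq ltnS ilen IH.
Qed.

Lemma cauchy_series_inv a n :
  a 0%N != 0 -> cauchy a (series_inv a) n = (n == 0%N)%:R.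
Proof.
move=> a0; rewrite /cauchy big_ord_recl subn0.
case: n => [|n]; first by rewrite big_ord0 addr0 /series_inv /= mulfV.
rewrite {1}/series_inv /= nth_rcons size_series_inv_seq ltnn eqxx.
under eq_bigr => i _ do rewrite (nth_series_inv_seq a (leq_subr i n)).
by rewrite mulrA mulrN mulfV // mulN1r addNr.
Qed.

Lemma expands_inv f a : expands f a -> a 0%N != 0 ->
  expands (fun t => (f t)^-1) (series_inv a).
Proof.
move=> E a0 N; apply: expands_upto_pred; set b := series_inv a.
have [d1 d10 low] := expands_bounded_below (E 1%N) a0.
have [d2 d20 [K HK]] : expands_upto (fun t => f t * trunc_sum b N.+1 t)
    (fun n => (n == 0%N)%:R) N.+1.
  apply: expands_upto_ext (expands_upto_mul (E N.+1) (expands_poly _ N.+1)) => // n nN.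
  rewrite -(cauchy_series_inv n a0); apply: eq_bigr => -[i /=]; rewrite ltnS => ilen _.
  by rewrite coef_poly (leq_ltn_trans (leq_subr i n) nN).
have trunc_delta t : trunc_sum (fun n => (n == 0%N)%:R) N.+1 t = 1.
  by rewrite /trunc_sum horner_poly big_ord_recl big1 ?addr0 ?mulr1 // => i _; rewrite mul0r.
exists (Num.min d1 d2); first by rewrite lt_min d10.
exists (2 / `|a 0%N| * K) => t t0; rewrite lt_min => /andP[t1 t2].
have a0pos : 0 < `|a 0%N| by rewrite normr_gt0.
have fpos : 0 < `|f t| by apply: lt_le_trans (low t t0 t1); rewrite divr_gt0.
have -> : (f t)^-1 - trunc_sum b N.+1 t = - (f t * trunc_sum b N.+1 t - 1) / f t.
  by field; rewrite -normr_gt0.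
have near_one := HK t t0 t2; rewrite trunc_delta in near_one.
have inv_low : `|f t|^-1 <= 2 / `|a 0%N|.
  by rewrite -[2 / _]invf_div lef_pV2 ?posrE ?divr_gt0 // low.
rewrite normrM normrN normfV.
apply: le_trans (ler_pM _ _ near_one inv_low) _; rewrite ?normr_ge0 ?invr_ge0 //.
by rewrite mulrC mulrA.
Qed.

Lemma expands_upto_at_infty f a N : expands_upto f a N ->
  exists M K : R, forall c, M < c ->
    `|c * f c^-1 - \sum_(i < N) a i * c ^ (1 - i%:Z)| <= K * c ^ (1 - N%:Z).
Proof.
move=> [del del0 [K HK]]; exists del^-1, K => c hc.
have c0 : 0 < c by apply: lt_trans hc; rewrite invr_gt0.
have pow i : c ^ (1 - i%:Z) = c * c^-1 ^+ i.
  by rewrite expfzDr ?gt_eqF // expr1z exprVn -exprnN.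
have -> : \sum_(i < N) a i * c ^ (1 - i%:Z) = c * trunc_sum a N c^-1.
  by rewrite /trunc_sum horner_poly mulr_sumr; apply: eq_bigr => i _; rewrite pow mulrCA.
rewrite -mulrBr normrM gtr0_norm // pow mulrCA ler_wpM2l ?(ltW c0) //.
by apply: HK; rewrite ?invr_gt0 // -[del]invrK ltf_pV2 ?posrE ?invr_gt0.
Qed.

Definition expansion_head f x0 x1 := exists2 a, expands f a & a 0%N = x0 /\ a 1%N = x1.

Lemma expansion_head_eq f h x0 x1 y0 y1 : f =1 h -> x0 = y0 -> x1 = y1 ->
  expansion_head f x0 x1 -> expansion_head h y0 y1.
Proof. by move=> efh <- <- [a E a01]; exists a => //; apply: expands_ext E. Qed.

Lemma expansion_head_lin x0 x1 : expansion_head (fun t => x0 + x1 * t) x0 x1.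
Proof.
exists (fun i => (x0%:P + x1 *: 'X)`_i); last by rewrite !coefE /= mulr0 mulr1 addr0 add0r.
by apply: expands_ext (expands_poly _) => // t; rewrite hornerD hornerZ hornerC hornerX.
Qed.

Lemma expansion_head_const x0 : expansion_head (fun=> x0) x0 0.
Proof. by apply: expansion_head_eq (expansion_head_lin x0 0) => // t; rewrite mul0r addr0. Qed.

Lemma expansion_head_add f h x0 x1 y0 y1 :
  expansion_head f x0 x1 -> expansion_head h y0 y1 ->
  expansion_head (fun t => f t + h t) (x0 + y0) (x1 + y1).
Proof.
move=> [a Ea [<- <-]] [b Eb [<- <-]]; exists (fun i => a i + b i) => //.
exact: expands_add.
Qed.

Lemma expansion_head_mul f h x0 x1 y0 y1 :
  expansion_head f x0 x1 -> expansion_head h y0 y1 ->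
  expansion_head (fun t => f t * h t) (x0 * y0) (x0 * y1 + x1 * y0).
Proof.
move=> [a Ea [<- <-]] [b Eb [<- <-]]; exists (cauchy a b); first exact: expands_mul.
by rewrite /cauchy big_ord_recl !big_ord0 big_ord_recl big_ord1 !addr0.
Qed.

Lemma expansion_head_inv f x0 x1 : expansion_head f x0 x1 -> x0 != 0 ->
  expansion_head (fun t => (f t)^-1) x0^-1 (- x1 / x0 ^+ 2).
Proof.
move=> [a Ea [<- <-]] a0; exists (series_inv a); first exact: expands_inv.
by split => //; rewrite /series_inv /= big_ord1 /=; field.
Qed.

Lemma expansion_head_sum n (F : 'I_n -> R -> R) (X0 X1 : 'I_n -> R) :
  (forall j, expansion_head (F j) (X0 j) (X1 j)) ->
  expansion_head (fun t => \sum_(j < n) F j t) (\sum_(j < n) X0 j) (\sum_(j < n) X1 j).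
Proof.
elim: n F X0 X1 => [|n IH] F X0 X1 HF.
  apply: expansion_head_eq (expansion_head_const 0) => [t||]; by rewrite big_ord0.
apply: expansion_head_eq (expansion_head_add (IH _ _ _ (fun j => HF (widen_ord (leqnSn n) j)))
  (HF ord_max)) => [t||]; by rewrite big_ord_recr.
Qed.

Lemma expansion_head_eventually_neq0 f x0 x1 : expansion_head f x0 x1 -> x0 != 0 ->
  exists2 del : R, 0 < del & forall t, 0 < t -> t < del -> f t != 0.
Proof.
move=> [a Ea [a0 _]] x0n; rewrite -a0 in x0n.
have [del del0 low] := expands_bounded_below (Ea 1%N) x0n.
exists del => // t t0 tdel; rewrite -normr_gt0; apply: lt_le_trans (low t t0 tdel).
by rewrite divr_gt0 ?normr_gt0.
Qed.

End AsymptoticExpansion.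

Lemma cramer2_eq0 (F : fieldType) (m11 m12 m21 m22 x y : F) :
  m11 * m22 - m12 * m21 != 0 -> m11 * x + m12 * y = 0 -> m21 * x + m22 * y = 0 ->
  x = 0 /\ y = 0.
Proof.
move=> det_neq0 e1 e2.
have ex : (m11 * m22 - m12 * m21) * x = m22 * (m11 * x + m12 * y) - m12 * (m21 * x + m22 * y).
  by ring.
have ey : (m11 * m22 - m12 * m21) * y = m11 * (m21 * x + m22 * y) - m21 * (m11 * x + m12 * y).
  by ring.
rewrite e1 e2 !mulr0 subrr in ex ey.
by move/eqP: ex; move/eqP: ey; rewrite !mulf_eq0 (negbTE det_neq0) => /eqP ? /eqP.
Qed.

Section SchurComplement.
Variables (R : realType) (l : nat) (r : nat -> nat) (d : nat -> int) (g : nat).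
Hypothesis l_ge2 : (2 <= l)%N.
Hypothesis r_gt0 : forall k, (k <= l)%N -> (0 < r k)%N.
Hypothesis d_sum0 : (\sum_(k < l.+1) d k = 0)%R.

Definition rR k : R := (r k)%:R.
Definition dR k : R := (d k)%:~R.
Definition rVR : R := (rV l r)%:R.

Lemma sum_split01 (F : nat -> R) :
  \sum_(k < l.+1) F k = F 0%N + F 1%N + \sum_(i < l.-1) F i.+2.
Proof. by case: l l_ge2 => [|[|n]] // _; rewrite !big_ord_recl addrA. Qed.

Lemma sum_tail_rR : \sum_(i < l.-1) rR i.+2 = rVR - rR 0 - rR 1.
Proof. by rewrite /rVR /rV natr_sum (sum_split01 rR); ring. Qed.

Lemma sum_tail_dR : \sum_(i < l.-1) dR i.+2 = - (dR 0 + dR 1).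
Proof.
have : \sum_(k < l.+1) dR k = 0 by rewrite -rmorph_sum /= d_sum0.
rewrite sum_split01; lra.
Qed.

Lemma dV_eq0 : dV R l d = 0.
Proof. by rewrite /dV -rmorph_sum /= d_sum0. Qed.

Lemma ord_tail_le (i : 'I_l.-1) : (i.+2 <= l)%N.
Proof. by have := ltn_ord i; lia. Qed.

Lemma rR_gt0 j : (j <= l)%N -> 0 < rR j.
Proof. by move=> jl; rewrite ltr0n r_gt0. Qed.

Lemma rVR_gt0 : 0 < rVR.
Proof.
have := sum_tail_rR; have := rR_gt0 (leq0n l); have := rR_gt0 (ltnW l_ge2).
have : 0 <= \sum_(i < l.-1) rR i.+2 by apply: sumr_ge0 => i _; apply: ler0n.
lra.
Qed.

Lemma piR_gt0 : 0 < piR R l r.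
Proof. by rewrite ltr0n prodn_gt0 // => i; rewrite fact_gt0. Qed.

Lemma rV_eq_succ : (rV l r = (rV l r).-1.+1)%N.
Proof. by rewrite prednK // -(ltr0n R) rVR_gt0. Qed.

Definition kappa : R := piR R l r / ((rV l r).+2`!)%:R.
Definition Adiag j (t : R) := (rVR + 2) * rR j - 2 * dR j * t.
Definition Acoef j (t : R) := t * ((rVR + 2) / (rVR + 1) * t * dR j - 2 * rR j).

Lemma Amat_entry j k t : (j <= l)%N -> (k <= l)%N -> t != 0 ->
  alpha2 l r d j k t^-1 - alpha1 l r d j t^-1 * alpha1 l r d k t^-1 / alpha0 l r d t^-1
  = kappa / t * ((j == k)%:R * Adiag j t - (Adiag j t * rR k + Acoef j t * dR k) / rVR).
Proof.
move=> jl kl t0; have := rR_gt0 jl; have := rR_gt0 kl; have := piR_gt0.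
rewrite /alpha2 /alpha1 /alpha0 /kappa /Adiag /Acoef /mu dV_eq0 -/(rR j) -/(rR k) -/(dR j) -/(dR k).
have := rVR_gt0; rewrite /rVR rV_eq_succ !factS !natrM -!natr1.
have := ltr0n R ((rV l r).-1`!); rewrite fact_gt0.
move=> /= ? ? ? ? ?.
by case: eqP => [<-|_]; rewrite ?mul1r ?mul0r; field; rewrite ?(gt_eqF, t0) //=; lra.
Qed.

Definition Bcoef (c : R) := piR R l r ^+ 2 * (2 * (1 - g%:R) - 2 * rVR * c)
  / (((rV l r).-1`!)%:R * ((rV l r).+1`!)%:R).

Lemma alpha_beta_minor j c : (j <= l)%N ->
  alpha0 l r d c * beta1 l r d g j c - alpha1 l r d j c * beta0 l r d g c = Bcoef c * dR j.
Proof.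
move=> jl; have := rR_gt0 jl; have := piR_gt0.
rewrite /beta0 /beta1 /alpha1 /alpha0 /Bcoef /mu dV_eq0 -/(rR j) -/(dR j).
have := rVR_gt0; rewrite /rVR rV_eq_succ !factS !natrM -!natr1.
have := ltr0n R ((rV l r).-1`!); rewrite fact_gt0.
move=> /= ? ? ? ?.
by field; rewrite ?gt_eqF //=; lra.
Qed.

Definition Aslope j (t : R) := Acoef j t / Adiag j t.
Definition Asum W (t : R) := \sum_(i < l.-1) W i.+2 * Aslope i.+2 t.
Definition det2 (t : R) :=
  (rR 0 + rR 1) * (rVR - Asum dR t) + (dR 0 + dR 1) * Asum rR t.

Lemma sum_tail_affine W x y t :
  \sum_(i < l.-1) W i.+2 * (x + Aslope i.+2 t * y) = x * \sum_(i < l.-1) W i.+2 + y * Asum W t.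
Proof.
rewrite /Asum !mulr_sumr -big_split; apply: eq_bigr => i _ /=; ring.
Qed.

Definition Kphi : R := 2 * piR R l r ^+ 2 * rVR * rR 0 * rR 1
  / (((rV l r).-1`!)%:R * ((rV l r).+1`!)%:R).
Definition phi (t : R) := Kphi * (rVR + (g%:R - 1) * t) / det2 t.

Section ReducedSystem.
Variable t : R.
Hypothesis t_gt0 : 0 < t.
Hypothesis Adiag_neq0 : forall i : 'I_l.-1, Adiag i.+2 t != 0.
Hypothesis det2_neq0 : det2 t != 0.

Lemma Amat_entry_tail (i k : 'I_l.-1) : Amat l r d t^-1 i k
  = kappa / t * Adiag i.+2 t * ((i == k)%:R - (rR k.+2 + Aslope i.+2 t * dR k.+2) / rVR).
Proof.
rewrite mxE (Amat_entry (ord_tail_le i) (ord_tail_le k) (lt0r_neq0 t_gt0)) eqSS.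
rewrite -[(i == k)]/(nat_of_ord i == k) /Aslope.
by field; rewrite Adiag_neq0 (lt0r_neq0 t_gt0) (lt0r_neq0 rVR_gt0).
Qed.

Lemma Amat_mulv (v : 'I_l.-1 -> R) (i : 'I_l.-1) :
  \sum_(k < l.-1) Amat l r d t^-1 i k * v k = kappa / t * Adiag i.+2 t
    * (v i - (\sum_(k < l.-1) rR k.+2 * v k
              + Aslope i.+2 t * \sum_(k < l.-1) dR k.+2 * v k) / rVR).
Proof.
under eq_bigr => k _ do rewrite Amat_entry_tail -mulrA.
rewrite -mulr_sumr; congr (_ * _).
under eq_bigr => k _ do rewrite mulrBl.
rewrite sumrB (bigD1 i) //= eqxx mul1r big1 => [|k /negbTE]; last first.
  by rewrite eq_sym => ->; rewrite mul0r.
rewrite addr0 mulr_sumr -big_split mulr_suml; congr (_ - _); apply: eq_bigr => k _ /=; ring.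
Qed.

(* Cramer's rule for [[r_0 + r_1, - Asum rR t], [d_0 + d_1, r_V - Asum dR t]] (p, q)
   = r_V (r_1, d_1), the system satisfied by p = r_1 - sum r_k y_k, q = d_1 - sum d_k y_k. *)
Definition sol_p := rVR * (rR 1 * (rVR - Asum dR t) + dR 1 * Asum rR t) / det2 t.
Definition sol_q := rVR * (rR 0 * dR 1 - rR 1 * dR 0) / det2 t.
Definition sol (i : 'I_l.-1) := - sol_p / rVR + Aslope i.+2 t * (- sol_q / rVR).

Lemma sum_rR_sol : \sum_(i < l.-1) rR i.+2 * sol i = rR 1 - sol_p.
Proof.
rewrite sum_tail_affine sum_tail_rR /sol_p /sol_q.
move: det2_neq0; rewrite /det2 => det_neq0.
by field; rewrite det_neq0 (lt0r_neq0 rVR_gt0).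
Qed.

Lemma sum_dR_sol : \sum_(i < l.-1) dR i.+2 * sol i = dR 1 - sol_q.
Proof.
rewrite sum_tail_affine sum_tail_dR /sol_p /sol_q.
move: det2_neq0; rewrite /det2 => det_neq0.
by field; rewrite det_neq0 (lt0r_neq0 rVR_gt0).
Qed.

Lemma Amat_sol : Amat l r d t^-1 *m \col_i sol i = \col_(j < l.-1)
  (alpha2 l r d j.+2 1 t^-1 - alpha1 l r d 1 t^-1 * alpha1 l r d j.+2 t^-1 / alpha0 l r d t^-1).
Proof.
apply/matrixP => i j; rewrite mxE [RHS]mxE.
rewrite (eq_bigr (fun k => Amat l r d t^-1 i k * sol k)) => [|k _]; last by rewrite !mxE.
rewrite Amat_mulv sum_rR_sol sum_dR_sol (mulrC (alpha1 _ _ _ 1 _)).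
rewrite (Amat_entry (ord_tail_le i) (ltnW l_ge2) (lt0r_neq0 t_gt0)) /= /sol /Aslope.
by field; rewrite Adiag_neq0 (lt0r_neq0 t_gt0) (lt0r_neq0 rVR_gt0).
Qed.

Lemma Amat_unit : Amat l r d t^-1 \in unitmx.
Proof.
rewrite unitmxE unitfE -det_tr; apply/negP => /det0P[v v_neq0 vA].
set P := \sum_(k < l.-1) rR k.+2 * v 0 k; set Q := \sum_(k < l.-1) dR k.+2 * v 0 k.
have v_eq k : v 0 k = P / rVR + Aslope k.+2 t * (Q / rVR).
  move/matrixP: vA => /(_ 0 k); rewrite mxE [RHS]mxE.
  rewrite (eq_bigr (fun i => Amat l r d t^-1 k i * v 0 i)) => [|i _]; last first.
    by rewrite [_^T _ _]mxE mulrC.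
  rewrite Amat_mulv -/P -/Q => /eqP; rewrite !mulf_eq0 !invr_eq0 (negbTE (Adiag_neq0 k)).
  rewrite (gt_eqF t_gt0) (gt_eqF piR_gt0) pnatr_eq0 gtn_eqF ?fact_gt0 //= subr_eq0 => /eqP ->.
  by field; rewrite (lt0r_neq0 rVR_gt0).
have eP : P = P / rVR * (rVR - rR 0 - rR 1) + Q / rVR * Asum rR t.
  by rewrite {1}/P (eq_bigr _ (fun k _ => congr1 _ (v_eq k))) sum_tail_affine sum_tail_rR.
have eQ : Q = - P / rVR * (dR 0 + dR 1) + Q / rVR * Asum dR t.
  rewrite {1}/Q (eq_bigr _ (fun k _ => congr1 _ (v_eq k))) sum_tail_affine sum_tail_dR.
  ring.
have RV_neq0 := lt0r_neq0 rVR_gt0.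
have [P0 Q0] : P = 0 /\ Q = 0.
  apply: (@cramer2_eq0 _ (rR 0 + rR 1) (- Asum rR t) (dR 0 + dR 1) (rVR - Asum dR t)).
  - by move: det2_neq0; rewrite /det2 mulNr opprK [_ * (dR 0 + _)]mulrC.
  - have -> : (rR 0 + rR 1) * P + - Asum rR t * Q
      = rVR * (P - (P / rVR * (rVR - rR 0 - rR 1) + Q / rVR * Asum rR t)) by field.
    by rewrite -eP subrr mulr0.
  - have -> : (dR 0 + dR 1) * P + (rVR - Asum dR t) * Q
      = rVR * (Q - (- P / rVR * (dR 0 + dR 1) + Q / rVR * Asum dR t)) by field.
    by rewrite -eQ subrr mulr0.
move/eqP: v_neq0; apply; apply/matrixP => i k.
by rewrite ord1 v_eq P0 Q0 !mxE !mul0r mulr0 addr0.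
Qed.

Lemma Fring_sol : Fring l r d g t^-1 = Bcoef t^-1 * sol_q.
Proof.
set a := \col_(j < l.-1)
  (alpha2 l r d j.+2 1 t^-1 - alpha1 l r d 1 t^-1 * alpha1 l r d j.+2 t^-1 / alpha0 l r d t^-1).
have sol_inv : \col_i sol i = invmx (Amat l r d t^-1) *m a.
  by rewrite /a -Amat_sol mulKmx // Amat_unit.
have sol_entry s : sol s = \sum_(j < l.-1) invmx (Amat l r d t^-1) s j
    * (alpha2 l r d j.+2 1 t^-1 - alpha1 l r d 1 t^-1 * alpha1 l r d j.+2 t^-1 / alpha0 l r d t^-1).
  move/matrixP: sol_inv => /(_ s 0); rewrite mxE [RHS]mxE => ->.
  by apply: eq_bigr => j _; rewrite mxE.
rewrite /Fring alpha_beta_minor ?(ltnW l_ge2) // exchange_big /=.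
rewrite (eq_bigr (fun s : 'I_l.-1 => Bcoef t^-1 * (dR s.+2 * sol s))) => [|s _]; last first.
  rewrite sol_entry alpha_beta_minor ?ord_tail_le //.
  by rewrite !mulr_sumr; apply: eq_bigr => j _; ring.
by rewrite -mulr_sumr -mulrBr sum_dR_sol; ring.
Qed.

Lemma Fring_phi : Fring l r d g t^-1 = (mu R r d 0 - mu R r d 1) * t^-1 * phi t.
Proof.
have := rR_gt0 (leq0n l); have := rR_gt0 (ltnW l_ge2).
rewrite Fring_sol /sol_q /Bcoef /phi /Kphi /mu -/(rR 0) -/(rR 1) -/(dR 0) -/(dR 1) => r1 r0.
field; rewrite det2_neq0 (lt0r_neq0 t_gt0) (lt0r_neq0 r0) (lt0r_neq0 r1).
by rewrite !pnatr_eq0 !gtn_eqF ?fact_gt0.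
Qed.

End ReducedSystem.

Lemma expansion_head_Aslope j : (j <= l)%N ->
  expansion_head (Aslope j) 0 (- 2 / (rVR + 2)).
Proof.
move=> jl; have rj := rR_gt0 jl; have RV := rVR_gt0.
have num := expansion_head_mul (expansion_head_lin 0 1)
  (expansion_head_lin (- 2 * rR j) ((rVR + 2) / (rVR + 1) * dR j)).
have den := expansion_head_inv (expansion_head_lin ((rVR + 2) * rR j) (- 2 * dR j)).
apply: expansion_head_eq (expansion_head_mul num (den _)) => [t|||].
- by rewrite /Aslope /Acoef /Adiag; congr (_ * _^-1); ring.
- by rewrite !mul0r.
- by field; rewrite !gt_eqF //; lra.
- by rewrite mulf_neq0 ?gt_eqF //; lra.
Qed.

Lemma expansion_head_Asum W :
  expansion_head (Asum W) 0 (- 2 / (rVR + 2) * \sum_(i < l.-1) W i.+2).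
Proof.
apply: expansion_head_eq (expansion_head_sum (fun i : 'I_l.-1 => expansion_head_mul
  (expansion_head_const (W i.+2)) (expansion_head_Aslope (ord_tail_le i)))) => [t||] //.
- by rewrite big1 // => i _; rewrite mulr0.
- by rewrite mulr_sumr; apply: eq_bigr => i _; ring.
Qed.

Lemma expansion_head_det2 :
  expansion_head det2 ((rR 0 + rR 1) * rVR) (- 2 * (dR 0 + dR 1) * rVR / (rVR + 2)).
Proof.
have RV := rVR_gt0.
have minus_Sd := expansion_head_mul (expansion_head_const (-1)) (expansion_head_Asum dR).
have lhs := expansion_head_mul (expansion_head_const (rR 0 + rR 1))
  (expansion_head_add (expansion_head_const rVR) minus_Sd).
have rhs := expansion_head_mul (expansion_head_const (dR 0 + dR 1)) (expansion_head_Asum rR).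
apply: expansion_head_eq (expansion_head_add lhs rhs) => [t||].
- by rewrite /det2 mulN1r.
- by ring.
- by rewrite sum_tail_rR sum_tail_dR; field; rewrite gt_eqF //; lra.
Qed.

Lemma det2_const_neq0 : (rR 0 + rR 1) * rVR != 0.
Proof.
have := rR_gt0 (leq0n l); have := rR_gt0 (ltnW l_ge2); have := rVR_gt0.
by move=> *; rewrite mulf_neq0 ?gt_eqF //; lra.
Qed.

Lemma expansion_head_phi : expansion_head phi (Fut1 R l r) (Fut2 R l r d g).
Proof.
have := rVR_gt0; have := rR_gt0 (ltnW l_ge2); have := rR_gt0 (leq0n l).
have f1 : 0 < ((rV l r).-1`!)%:R :> R by rewrite ltr0n fact_gt0.
have f2 : 0 < ((rV l r).+1`!)%:R :> R by rewrite ltr0n fact_gt0.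
rewrite /rR /rVR => r0 r1 RV.
apply: expansion_head_eq (expansion_head_mul (expansion_head_mul (expansion_head_const Kphi)
  (expansion_head_lin rVR (g%:R - 1))) (expansion_head_inv expansion_head_det2 det2_const_neq0))
  => [t||] //.
- by rewrite /Fut1 /Kphi; field; rewrite !gt_eqF //; lra.
- rewrite /Fut2 /mu01 /Kphi (factS (rV l r).+1) natrM.
  by field; rewrite !gt_eqF //; lra.
Qed.

Lemma Fut1_gt0 : 0 < Fut1 R l r.
Proof.
have := rR_gt0 (leq0n l); have := rR_gt0 (ltnW l_ge2); have := rVR_gt0; have := piR_gt0.
rewrite /Fut1 natrD -/(rR 0) -/(rR 1) -/rVR => pi_gt0 RV r1 r0.
by rewrite divr_gt0 ?mulr_gt0 ?exprn_gt0 ?addr_gt0 // ltr0n fact_gt0.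
Qed.

Definition dbound : R := \sum_(i < l.-1) `|dR i.+2|.

Lemma Adiag_tail_gt0 (i : 'I_l.-1) t : 0 <= t -> t * dbound <= 1 -> 0 < Adiag i.+2 t.
Proof.
move=> t0 tb; have ri : 1 <= rR i.+2 by rewrite ler1n r_gt0 ?ord_tail_le.
have di : dR i.+2 <= dbound.
  apply: le_trans (ler_norm _) _; rewrite /dbound (bigD1 i) //= lerDl.
  by apply: sumr_ge0 => *; apply: normr_ge0.
have := rVR_gt0; rewrite /Adiag; nra.
Qed.

Lemma Fring_phi_eventually : exists M : R, forall c, M < c ->
  Fring l r d g c = (mu R r d 0 - mu R r d 1) * c * phi c^-1.
Proof.
have [del del0 det2_neq0] := expansion_head_eventually_neq0 expansion_head_det2 det2_const_neq0.
have db0 : 0 <= dbound by apply: sumr_ge0 => *; apply: normr_ge0.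
exists (dbound + del^-1) => c hc.
have c0 : 0 < c by apply: le_lt_trans hc; rewrite addr_ge0 // invr_ge0 ltW.
have ci0 : 0 < c^-1 by rewrite invr_gt0.
rewrite -[in LHS](invrK c) -[X in _ * X * _](invrK c) Fring_phi //.
- move=> i; apply/lt0r_neq0/Adiag_tail_gt0; first exact: ltW.
  rewrite mulrC ler_pdivrMr // mul1r; apply: le_trans (ltW hc).
  by rewrite lerDl invr_ge0 ltW.
- apply: det2_neq0 => //; rewrite -[del]invrK ltf_pV2 ?posrE ?invr_gt0 //.
  by apply: le_lt_trans hc; rewrite lerDr.
Qed.

End SchurComplement.

Theorem proposition3p18 (R : realType) (l : nat) (r : nat -> nat)
    (d : nat -> int) (g : nat) :
  (2 <= l)%N ->
  (forall k, (k <= l)%N -> (0 < r k)%N) ->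
  (\sum_(k < l.+1) d k = 0)%R ->
  (1 <= g)%N ->
  0 < Fut1 R l r /\
  exists Fut : nat -> R,
    Fut 1%N = Fut1 R l r /\ Fut 2%N = Fut2 R l r d g /\
    forall N : nat, exists M K : R, forall c : R, M < c ->
      `| Fring l r d g c
         - (mu R r d 0 - mu R r d 1)
           * \sum_(i < N) Fut i.+1 * c ^ (1 - (i : nat)%:Z) |
      <= K * c ^ (1 - N%:Z).
Proof.
(* The expansion holds for every g. *)
move=> l_ge2 r_gt0 d_sum0 _.
split; first exact: Fut1_gt0.
have [a phi_expands [a0 a1]] := expansion_head_phi R g l_ge2 r_gt0 d_sum0.
have [M0 FringE] := Fring_phi_eventually R g l_ge2 r_gt0 d_sum0.
exists (fun i => a i.-1); split=> //; split=> // N.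
have [M [K HK]] := expands_upto_at_infty (phi_expands N).
exists (Num.max M0 M), (`|mu R r d 0 - mu R r d 1| * K) => c.
rewrite gt_max => /andP[cM0 cM].
rewrite FringE // -mulrA -mulrBr normrM -mulrA ler_wpM2l //.
exact: HK.
Qed.
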